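(* Let $H$ be a group, $K\lneq H$, $\phi\in\operatorname{Aut}(H)$, $G=\langle H,t;\ tkt^{-1}=\phi(k),\ k\in K\rangle$. The map $\overline{\chi_2}:N_H(K)\to\operatorname{Out}_H^{(V)}(G)$ sending $b$ to the outer class of $\alpha_{(\gamma_b,\,b^{-1}\phi(b))}$ is a homomorphism with kernel $JK$, where $J=Z(H)\cap\operatorname{Fix}(\phi)$.
   Context: $\gamma_b$ denotes $h\mapsto b^{-1}hb$; $\operatorname{Fix}(\phi)=\{h\in H:\phi(h)=h\}$. For $\delta\in\operatorname{Aut}(H)$ and $a\in H$ with $\delta(K)=K$ and $\phi(\delta(k))=a^{-1}\delta(\phi(k))a$ for all $k\in K$, $\alpha_{(\delta,a)}$ denotes the automorphism of $G$ given by $h\mapsto\delta(h)$ ($h\in H$), $t\mapsto at$. $\operatorname{Out}_H^{(V)}(G)$ is the subgroup of $\operatorname{Out}(G)$ consisting of the outer classes of the automorphisms $\alpha_{(\gamma_b,a)}$, where $b\in N_H(K)$, $a\in H$ and $ba\phi(b)^{-1}\in C_H(\phi(K))$. Automorphisms are composed left to right. *)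

From Stdlib Require Import Classical.

Record Group := {
  gcar :> Type;
  gmul : gcar -> gcar -> gcar;
  gone : gcar;
  ginv : gcar -> gcar;
  gmulA : forall x y z, gmul x (gmul y z) = gmul (gmul x y) z;
  gmul1 : forall x, gmul gone x = x;
  gmulV : forall x, gmul (ginv x) x = gone
}.

Arguments gmul {g} _ _.
Arguments gone {g}.
Arguments ginv {g} _.

Declare Scope grp_scope.
Delimit Scope grp_scope with grp.
Infix "*" := gmul : grp_scope.
Notation "x ^-1" := (ginv x) (at level 3, left associativity, format "x ^-1") : grp_scope.
Notation "1" := gone : grp_scope.
Open Scope grp_scope.

Definition is_hom {A B : Group} (f : A -> B) : Prop :=
  forall x y, f (x * y) = f x * f y.

Definition is_aut {A : Group} (f : A -> A) : Prop :=
  is_hom f /\ exists g : A -> A, (forall x, g (f x) = x) /\ (forall x, f (g x) = x).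

Definition is_subgroup {A : Group} (K : A -> Prop) : Prop :=
  K 1 /\ (forall x y, K x -> K y -> K (x * y)) /\ (forall x, K x -> K (x^-1)).

Definition proper {A : Group} (K : A -> Prop) : Prop := exists h : A, ~ K h.

Definition gam {A : Group} (b : A) : A -> A := fun h => b^-1 * h * b.

Definition normalizer {A : Group} (K : A -> Prop) (b : A) : Prop :=
  forall x, K x <-> K (b^-1 * x * b).

Definition center {A : Group} (z : A) : Prop := forall h : A, z * h = h * z.
Definition Fix {A : Group} (phi : A -> A) (h : A) : Prop := phi h = h.
Definition Jset {A : Group} (phi : A -> A) (j : A) : Prop := center j /\ Fix phi j.

Definition prodset {A : Group} (P Q : A -> Prop) (x : A) : Prop :=
  exists p q, P p /\ Q q /\ x = p * q.

(* G = < H, t ; t k t^-1 = phi(k), k in K >, characterised by its universal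
   property: iH : H -> G homomorphism and t : G satisfy the relations, and for
   every group X, homomorphism f : H -> X and x : X satisfying the relations
   there is exactly one homomorphism G -> X extending f and sending t to x. *)
Definition is_HNN (H : Group) (K : H -> Prop) (phi : H -> H)
  (G : Group) (iH : H -> G) (t : G) : Prop :=
  is_hom iH /\
  (forall k, K k -> t * iH k * t^-1 = iH (phi k)) /\
  (forall (X : Group) (f : H -> X) (x : X),
     is_hom f ->
     (forall k, K k -> x * f k * x^-1 = f (phi k)) ->
     (exists g : G -> X, is_hom g /\ (forall h, g (iH h) = f h) /\ g t = x) /\
     (forall g1 g2 : G -> X,
        is_hom g1 -> (forall h, g1 (iH h) = f h) -> g1 t = x ->
        is_hom g2 -> (forall h, g2 (iH h) = f h) -> g2 t = x ->
        forall y, g1 y = g2 y)).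

Definition is_alpha {H G : Group} (iH : H -> G) (t : G)
  (delta : H -> H) (a : H) (f : G -> G) : Prop :=
  is_hom f /\ (forall h, f (iH h) = iH (delta h)) /\ f t = iH a * t.

Definition is_inner {G : Group} (f : G -> G) : Prop :=
  exists c : G, forall x, f x = gam c x.

Definition out_eq {G : Group} (f g : G -> G) : Prop :=
  exists c : G, forall x, f x = gam c (g x).

Definition centralizes_img {H : Group} (K : H -> Prop) (phi : H -> H) (z : H) : Prop :=
  forall k, K k -> z * phi k = phi k * z.

Definition in_OutHV {H : Group} (K : H -> Prop) (phi : H -> H)
  {G : Group} (iH : H -> G) (t : G) (f : G -> G) : Prop :=
  exists b a g, normalizer K b /\ centralizes_img K phi (b * a * (phi b)^-1) /\
    is_alpha iH t (gam b) a g /\ is_aut g /\ out_eq f g.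

(* The parameters of [alpha_(gam b, b^-1 phi b)] compose like those of a
   homomorphism, and for [b = j k] with [j] in [J] and [k] in [K] this
   automorphism is conjugation by [k].  Conversely, if it is conjugation by [c],
   then [c b^-1] centralizes [H] in [G].  Letting [G] act on Britton normal
   forms [h t^e1 r1 ... t^en rn] shows that, [K] being proper, the centralizer
   of [H] in [G] is [Z(H)]: right multiplication by [H] changes the last letter
   of every nonempty normal form.  So [c = h0 b] with [h0] central, and the
   relation [c^-1 t c = b^-1 phi(b) t], read on normal forms, forces [h0 b] in
   [K] and [phi h0 = h0]. *)

From Stdlib Require Import ClassicalEpsilon FunctionalExtensionality PropExtensionality ProofIrrelevance List.
Import ListNotations.

Section GroupLaws.
Context {A : Group}.
Implicit Types x y z : A.

Lemma mulgV x : x * x^-1 = 1.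
Proof.
  rewrite <- (gmul1 A (x * x^-1)), <- (gmulV A x^-1) at 1.
  rewrite <- gmulA, (gmulA A x^-1 x x^-1), gmulV, gmul1. apply gmulV.
Qed.

Lemma mulg1 x : x * 1 = x.
Proof. rewrite <- (gmulV A x), gmulA, mulgV. apply gmul1. Qed.

Lemma mulKg x y : x^-1 * (x * y) = y.
Proof. rewrite gmulA, gmulV. apply gmul1. Qed.

Lemma mulKVg x y : x * (x^-1 * y) = y.
Proof. rewrite gmulA, mulgV. apply gmul1. Qed.

Lemma mulgK x y : x * y * y^-1 = x.
Proof. rewrite <- gmulA, mulgV. apply mulg1. Qed.

Lemma mulgKV x y : x * y^-1 * y = x.
Proof. rewrite <- gmulA, gmulV. apply mulg1. Qed.

Lemma mulgI x y z : x * y = x * z -> y = z.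
Proof. intro E. rewrite <- (mulKg x y), E. apply mulKg. Qed.

Lemma mulIg x y z : y * x = z * x -> y = z.
Proof. intro E. rewrite <- (mulgK y x), E. apply mulgK. Qed.

Lemma invg_uniq x y : x * y = 1 -> y = x^-1.
Proof. intro E. apply (mulgI x). rewrite E. symmetry; apply mulgV. Qed.

Lemma invgK x : (x^-1)^-1 = x.
Proof. symmetry. apply invg_uniq, gmulV. Qed.

Lemma invMg x y : (x * y)^-1 = y^-1 * x^-1.
Proof. symmetry. apply invg_uniq. rewrite <- gmulA, mulKVg. apply mulgV. Qed.

Lemma invg1 : (1 : A)^-1 = 1.
Proof. symmetry. apply invg_uniq, gmul1. Qed.

End GroupLaws.

Ltac gsimpl :=
  repeat progress (rewrite <- ?gmulA;
    rewrite ?invMg, ?invgK, ?invg1, ?gmul1, ?mulg1, ?gmulV, ?mulgV, ?mulKVg, ?mulKg).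

Lemma morph1 {A B : Group} (f : A -> B) : is_hom f -> f 1 = 1.
Proof. intro hf. apply (mulgI (f 1)). rewrite <- hf, gmul1, mulg1. reflexivity. Qed.

Lemma morphV {A B : Group} (f : A -> B) : is_hom f -> forall x, f x^-1 = (f x)^-1.
Proof. intros hf x. apply invg_uniq. rewrite <- hf, mulgV. apply morph1, hf. Qed.

Lemma gam_hom {A : Group} (b : A) : is_hom (gam b).
Proof. intros x y. unfold gam. gsimpl. reflexivity. Qed.

Lemma gam1 {A : Group} (x : A) : gam 1 x = x.
Proof. unfold gam. gsimpl. reflexivity. Qed.

Lemma gamM {A : Group} (b c : A) (x : A) : gam (b * c) x = gam c (gam b x).
Proof. unfold gam. gsimpl. reflexivity. Qed.

Lemma conj_eq_commute {A : Group} (c d y : A) :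
  c^-1 * y * c = d^-1 * y * d -> c * d^-1 * y = y * (c * d^-1).
Proof.
  intro E. apply (f_equal (fun x => c * x * d^-1)) in E. revert E. gsimpl.
  intro E. rewrite E. reflexivity.
Qed.

Section Subgroups.
Context {A : Group} (S : A -> Prop) (hS : is_subgroup S).

Lemma group1 : S 1.
Proof. apply hS. Qed.

Lemma groupM x y : S x -> S y -> S (x * y).
Proof. apply hS. Qed.

Lemma groupV x : S x -> S x^-1.
Proof. apply hS. Qed.

Lemma groupMl x y : S x -> S (x * y) -> S y.
Proof. intros hx hxy. rewrite <- (mulKg x y). auto using groupM, groupV. Qed.

Lemma groupMr x y : S y -> S (x * y) -> S x.
Proof. intros hy hxy. rewrite <- (mulgK x y). auto using groupM, groupV. Qed.

(* A fixed representative [r] of each right coset [S y], chosen so that the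
   coset [S] itself is represented by [1]. *)
Definition coset_rep (y : A) : A :=
  match excluded_middle_informative (S y) with
  | left _ => 1
  | right _ => epsilon (inhabits (1 : A)) (fun r => S (y * r^-1))
  end.

Lemma coset_repP y : S (y * (coset_rep y)^-1).
Proof.
  unfold coset_rep. destruct (excluded_middle_informative (S y)) as [h|h].
  - rewrite invg1, mulg1. exact h.
  - apply (epsilon_spec (inhabits (1 : A)) (fun r => S (y * r^-1))).
    exists y. rewrite mulgV. apply group1.
Qed.

Lemma coset_rep_eq y1 y2 : S (y1 * y2^-1) -> coset_rep y1 = coset_rep y2.
Proof.
  intro h. unfold coset_rep.
  assert (E : S y1 <-> S y2).
  { split; intro q.
    - apply (groupMl (y1 * y2^-1)); [exact h|]. rewrite mulgKV. exact q.
    - rewrite <- (mulgKV y1 y2). auto using groupM. }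
  destruct (excluded_middle_informative (S y1)) as [h1|h1];
  destruct (excluded_middle_informative (S y2)) as [h2|h2]; try tauto.
  f_equal. extensionality r. apply propositional_extensionality. split; intro q.
  - apply (groupMl (y1 * y2^-1)); [exact h|]. rewrite gmulA, mulgKV. exact q.
  - replace (y1 * r^-1) with (y1 * y2^-1 * (y2 * r^-1)) by (gsimpl; reflexivity).
    auto using groupM.
Qed.

Lemma coset_rep_eq1 y : coset_rep y = 1 <-> S y.
Proof.
  split.
  - intro e. pose proof (coset_repP y) as q. rewrite e, invg1, mulg1 in q. exact q.
  - intro q. unfold coset_rep. destruct (excluded_middle_informative (S y)); tauto.
Qed.

Lemma coset_rep_id y : coset_rep (coset_rep y) = coset_rep y.
Proof.
  apply coset_rep_eq. rewrite <- (invgK (coset_rep y)) at 1. rewrite <- invMg.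
  apply groupV, coset_repP.
Qed.

End Subgroups.

Section SymGroup.
Variable X : Type.

Record perm := Perm {
  pfun : X -> X; pinv : X -> X;
  pfunK : forall x, pinv (pfun x) = x; pinvK : forall x, pfun (pinv x) = x }.

Lemma perm_ext (p q : perm) : (forall x, pfun p x = pfun q x) -> p = q.
Proof.
  intro E. assert (Einv : forall x, pinv p x = pinv q x).
  { intro x. rewrite <- (pfunK q (pinv p x)), <- E, pinvK. reflexivity. }
  destruct p as [f g fK gK], q as [f' g' fK' gK']; simpl in *.
  assert (f = f') by (extensionality x; auto).
  assert (g = g') by (extensionality x; auto). subst.
  f_equal; apply proof_irrelevance.
Qed.

Definition perm_mul (p q : perm) : perm.
Proof.
  refine (Perm (fun x => pfun p (pfun q x)) (fun x => pinv q (pinv p x)) _ _);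
    intro x; rewrite ?pfunK, ?pinvK; reflexivity.
Defined.

Definition perm_one : perm := Perm (fun x => x) (fun x => x) (fun _ => eq_refl) (fun _ => eq_refl).

Definition perm_inv (p : perm) : perm := Perm (pinv p) (pfun p) (pinvK p) (pfunK p).

Definition SymGroup : Group.
Proof.
  refine {| gcar := perm; gmul := perm_mul; gone := perm_one; ginv := perm_inv |};
    intros; apply perm_ext; intro; simpl; auto using pfunK.
Defined.

End SymGroup.

(* The letter [(e, r)] stands for
   [t^e r] with [t^true = t], [t^false = t^-1], and [r] a coset representative
   modulo [assoc e] (the subgroup [K] if [e], [phi K] otherwise); [(h, l)]
   stands for [h] followed by the letters of [l]. *)
Section NormalForm.
Variables (H : Group) (K : H -> Prop) (phi phiinv : H -> H).
Hypotheses (HK : is_subgroup K) (phi_hom : is_hom phi).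
Hypotheses (phiK : forall x, phiinv (phi x) = x) (phiKV : forall x, phi (phiinv x) = x).

Lemma phiinv_hom : is_hom phiinv.
Proof. intros x y. rewrite <- (phiKV x), <- (phiKV y) at 1. rewrite <- phi_hom. apply phiK. Qed.

Definition assoc (e : bool) : H -> Prop := if e then K else fun y => K (phiinv y).
Definition assoc_iso (e : bool) : H -> H := if e then phi else phiinv.

Lemma assoc_subgroup e : is_subgroup (assoc e).
Proof.
  destruct e; simpl; [exact HK|]. split; [|split].
  - rewrite <- (morph1 phi phi_hom), phiK. apply group1, HK.
  - intros x y hx hy. rewrite phiinv_hom. apply groupM; auto.
  - intros x hx. rewrite (morphV _ phiinv_hom). apply groupV; auto.
Qed.

Lemma assoc_iso_hom e : is_hom (assoc_iso e).
Proof. destruct e; simpl; auto using phiinv_hom. Qed.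

Lemma assoc_iso_mem e s : assoc e s -> assoc (negb e) (assoc_iso e s).
Proof. destruct e; simpl; auto. rewrite phiK; auto. Qed.

Lemma assoc_isoK e s : assoc_iso (negb e) (assoc_iso e s) = s.
Proof. destruct e; simpl; auto. Qed.

Definition nf := (H * list (bool * H))%type.

Definition head_exp (l : list (bool * H)) : option bool := option_map fst (hd_error l).
Definition head_rep (l : list (bool * H)) : H := match l with (_, r) :: _ => r | [] => 1 end.

Fixpoint reduced (l : list (bool * H)) : Prop :=
  match l with
  | [] => True
  | (e, r) :: l' =>
      coset_rep (assoc e) r = r /\ ~ (r = 1 /\ head_exp l' = Some (negb e)) /\ reduced l'
  end.

(* Left multiplication by [t^e]: split [h = k r] with [k] in [assoc e], move
   [k] across [t^e], and cancel [t^e t^-e] when [r = 1]. *)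
Definition tmul (e : bool) (p : nf) : nf :=
  let (h, l) := p in
  let r := coset_rep (assoc e) h in
  let k := h * r^-1 in
  if excluded_middle_informative (r = 1 /\ head_exp l = Some (negb e))
  then (assoc_iso e k * head_rep l, tl l) else (assoc_iso e k, (e, r) :: l).

Lemma tmul_reduced e p : reduced (snd p) -> reduced (snd (tmul e p)).
Proof.
  destruct p as [h l]; simpl. intro v.
  destruct (excluded_middle_informative _) as [[_ c]|c]; simpl.
  - destruct l as [|[e' r'] l']; simpl in *; [discriminate | tauto].
  - split; [apply coset_rep_id, assoc_subgroup|]. auto.
Qed.

Lemma tmulK e p : reduced (snd p) -> tmul (negb e) (tmul e p) = p.
Proof.
  destruct p as [h l]. intro v. simpl in v.
  unfold tmul at 2.
  assert (hk := coset_repP _ (assoc_subgroup e) h).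
  set (r := coset_rep (assoc e) h) in *.
  destruct (excluded_middle_informative _) as [[r1 c]|c].
  - destruct l as [|[e' r'] l']; simpl in c; [discriminate|]. injection c as ->.
    destruct v as [rep_r' [red_r' v]]. simpl.
    assert (R : coset_rep (assoc (negb e)) (assoc_iso e (h * r^-1) * r') = r').
    { rewrite <- rep_r' at 2. apply coset_rep_eq; [apply assoc_subgroup|].
      rewrite mulgK. apply assoc_iso_mem, hk. }
    rewrite R. destruct (excluded_middle_informative _) as [c|c]; [tauto|].
    rewrite mulgK, assoc_isoK, r1, invg1, mulg1. reflexivity.
  - simpl.
    assert (R : coset_rep (assoc (negb e)) (assoc_iso e (h * r^-1)) = 1).
    { apply coset_rep_eq1; [apply assoc_subgroup|]. apply assoc_iso_mem, hk. }
    rewrite R. destruct (excluded_middle_informative _) as [c'|c'].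
    + simpl. rewrite invg1, mulg1, assoc_isoK, mulgKV. reflexivity.
    + exfalso. apply c'. split; [reflexivity|]. simpl. destruct e; reflexivity.
Qed.

Lemma tmul_assoc e s h l : assoc e s ->
  tmul e (s * h, l) = (assoc_iso e s * fst (tmul e (h, l)), snd (tmul e (h, l))).
Proof.
  intro hs. unfold tmul.
  assert (R : coset_rep (assoc e) (s * h) = coset_rep (assoc e) h).
  { apply coset_rep_eq; [apply assoc_subgroup|]. rewrite mulgK. exact hs. }
  rewrite R. destruct (excluded_middle_informative _); simpl;
    rewrite <- gmulA, assoc_iso_hom; try rewrite gmulA; reflexivity.
Qed.

Lemma tmul_nil e h :
  tmul e (h, []) = (assoc_iso e (h * (coset_rep (assoc e) h)^-1), [(e, coset_rep (assoc e) h)]).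
Proof.
  unfold tmul. destruct (excluded_middle_informative _) as [[_ c]|c]; [discriminate | reflexivity].
Qed.

Definition rnf := {p : nf | reduced (snd p)}.

Lemma rnf_ext (a b : rnf) : proj1_sig a = proj1_sig b -> a = b.
Proof. destruct a, b; simpl; intro E; subst. f_equal. apply proof_irrelevance. Qed.

Definition NFGroup : Group := SymGroup rnf.

Definition lmul (h : H) (p : nf) : nf := (h * fst p, snd p).

Definition Lperm (h : H) : NFGroup.
Proof.
  refine (Perm _ (fun w : rnf => exist _ (lmul h (proj1_sig w)) (proj2_sig w))
                 (fun w : rnf => exist _ (lmul h^-1 (proj1_sig w)) (proj2_sig w)) _ _);
    intros [[a l] v]; apply rnf_ext; simpl; unfold lmul; simpl; rewrite ?mulKg, ?mulKVg; reflexivity.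
Defined.

Definition Tperm : NFGroup.
Proof.
  refine (Perm _ (fun w : rnf => exist _ (tmul true (proj1_sig w)) (tmul_reduced true _ (proj2_sig w)))
                 (fun w : rnf => exist _ (tmul false (proj1_sig w)) (tmul_reduced false _ (proj2_sig w))) _ _);
    intro w; apply rnf_ext; simpl; [apply (tmulK true) | apply (tmulK false)]; apply proj2_sig.
Defined.

Lemma Lperm_hom : is_hom Lperm.
Proof. intros x y. apply perm_ext; intro w. apply rnf_ext; simpl; unfold lmul; simpl. rewrite gmulA. reflexivity. Qed.

Lemma Tperm_rel k : K k -> Tperm * Lperm k * Tperm^-1 = Lperm (phi k).
Proof.
  intro hk. apply perm_ext; intros [[a l] v]. apply rnf_ext. cbn -[tmul].
  destruct (tmul false (a, l)) as [a' l'] eqn:Ea. unfold lmul; cbn -[tmul].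
  rewrite (tmul_assoc true k a' l' hk), <- Ea.
  change (tmul true (tmul false (a, l))) with (tmul (negb false) (tmul false (a, l))).
  rewrite (tmulK false (a, l) v). reflexivity.
Qed.

Lemma assoc_total e : (forall y, assoc e y) -> forall h, K h.
Proof. destruct e; simpl; intros all h; [|rewrite <- (phiK h)]; apply all. Qed.

Fixpoint apply_letters (l : list (bool * H)) (p : nf) : nf :=
  match l with [] => p | (e, r) :: l' => tmul e (lmul r (apply_letters l' p)) end.

Lemma apply_letters_last l e r e' r' h :
  reduced ((e, r) :: l) -> last ((e, r) :: l) (true, 1) = (e', r') ->
  exists x r2 l2, apply_letters ((e, r) :: l) (h, []) = (x, (e, r2) :: l2) /\
    assoc (negb e) x /\ last ((e, r2) :: l2) (true, 1) = (e', coset_rep (assoc e') (r' * h)).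
Proof.
  revert e r. induction l as [|[e2 r2] l IH]; intros e r red L.
  - simpl in L. injection L as <- <-.
    change (apply_letters [(e, r)] (h, [])) with (tmul e (r * h, [])). rewrite tmul_nil.
    eexists _, _, _. split; [reflexivity|]. split; [|reflexivity].
    apply assoc_iso_mem, coset_repP, assoc_subgroup.
  - destruct red as [rep_r [red_r red]].
    destruct (IH e2 r2 red L) as (x & r3 & l3 & E & hx & L3).
    change (apply_letters ((e, r) :: (e2, r2) :: l) (h, []))
      with (tmul e (lmul r (apply_letters ((e2, r2) :: l) (h, [])))).
    rewrite E. unfold tmul, lmul. simpl.
    destruct (excluded_middle_informative _) as [[c1 c2]|c].
    + exfalso. simpl in c2. injection c2 as ->. rewrite Bool.negb_involutive in hx.
      apply red_r. split; [|reflexivity].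
      rewrite <- rep_r. apply (coset_rep_eq1 _ (assoc_subgroup e)).
      apply (groupMr _ (assoc_subgroup e) r x hx).
      apply (coset_rep_eq1 _ (assoc_subgroup e)), c1.
    + eexists _, _, _. split; [reflexivity|]. split; [|exact L3].
      apply assoc_iso_mem, coset_repP, assoc_subgroup.
Qed.

Lemma apply_letters_fixed_total e r l :
  reduced ((e, r) :: l) ->
  (forall h, snd (apply_letters ((e, r) :: l) (h, [])) = (e, r) :: l) -> forall h, K h.
Proof.
  intros red fixed.
  destruct (last ((e, r) :: l) (true, 1)) as [e' r'] eqn:L.
  assert (stable : forall h, coset_rep (assoc e') (r' * h) = r').
  { intro h. destruct (apply_letters_last l e r e' r' h red L) as (x & r2 & l2 & E & _ & L2).
    specialize (fixed h). rewrite E in fixed. simpl in fixed. rewrite fixed, L in L2.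
    injection L2 as E'. symmetry. exact E'. }
  apply (assoc_total e'). intro y.
  apply (coset_rep_eq1 _ (assoc_subgroup e')).
  rewrite <- (mulKVg r' y), stable, <- (stable (r'^-1)), mulgV.
  apply coset_rep_eq1; [apply assoc_subgroup | apply group1, assoc_subgroup].
Qed.

End NormalForm.

Definition subgroup_of (A : Group) (Q : A -> Prop) (Q1 : Q 1)
  (QM : forall x y, Q x -> Q y -> Q (x * y)) (QV : forall x, Q x -> Q x^-1) : Group.
Proof.
  refine {| gcar := {x : A | Q x};
            gmul := fun a b => exist _ (proj1_sig a * proj1_sig b) (QM _ _ (proj2_sig a) (proj2_sig b));
            gone := exist _ 1 Q1;
            ginv := fun a => exist _ (proj1_sig a)^-1 (QV _ (proj2_sig a)) |}.
  - intros [x ?] [y ?] [z ?]. apply subset_eq_compat, gmulA.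
  - intros [x ?]. apply subset_eq_compat, gmul1.
  - intros [x ?]. apply subset_eq_compat, gmulV.
Defined.

Section HNN.
Variables (H : Group) (K : H -> Prop) (phi : H -> H).
Variables (G : Group) (iH : H -> G) (t : G).
Hypothesis HG : is_HNN H K phi G iH t.

Lemma iH_hom : is_hom iH.
Proof. apply HG. Qed.

Lemma t_rel k : K k -> t * iH k * t^-1 = iH (phi k).
Proof. apply HG. Qed.

(* [G] is generated by [iH H] and [t]: the universal property, applied to the
   subgroup of elements satisfying [Q], gives a retraction of [G] onto it. *)
Lemma HNN_ind (Q : G -> Prop) (Q1 : Q 1)
  (QM : forall x y, Q x -> Q y -> Q (x * y)) (QV : forall x, Q x -> Q x^-1)
  (QH : forall h, Q (iH h)) (Qt : Q t) : forall x, Q x.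
Proof.
  destruct HG as [hiH [hrel hU]].
  destruct (hU (subgroup_of G Q Q1 QM QV) (fun h => exist _ (iH h) (QH h)) (exist _ t Qt))
    as [[g [hg [gH gt]]] _].
  - intros x y. apply subset_eq_compat, hiH.
  - intros k hk. apply subset_eq_compat, hrel, hk.
  - destruct (hU G iH t hiH hrel) as [_ uniq].
    intro x. replace x with (proj1_sig (g x)); [apply proj2_sig|].
    symmetry. apply (uniq (fun y => y) (fun y => proj1_sig (g y))); auto.
    + intros a b; reflexivity.
    + intros a b. rewrite hg. reflexivity.
    + intro h. rewrite gH. reflexivity.
    + rewrite gt. reflexivity.
Qed.

Lemma alpha_exists delta a :
  is_hom (fun h => iH (delta h)) ->
  (forall k, K k -> iH a * t * iH (delta k) * (iH a * t)^-1 = iH (delta (phi k))) ->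
  exists f, is_alpha iH t delta a f.
Proof.
  intros hf rel. destruct HG as [_ [_ hU]].
  destruct (hU G _ _ hf rel) as [[g [hg [gH gt]]] _]. exists g. split; auto.
Qed.

Lemma alpha_unique delta a delta' a' f1 f2 :
  is_alpha iH t delta a f1 -> is_alpha iH t delta' a' f2 ->
  (forall h, iH (delta h) = iH (delta' h)) -> iH a = iH a' -> forall y, f1 y = f2 y.
Proof.
  intros [h1 [H1 T1]] [h2 [H2 T2]] Ed Ea.
  destruct HG as [hiH [hrel hU]].
  assert (hf : is_hom (fun h => iH (delta h))).
  { intros x y. rewrite <- !H1, hiH. apply h1. }
  assert (rel : forall k, K k -> iH a * t * iH (delta k) * (iH a * t)^-1 = iH (delta (phi k))).
  { intros k hk. rewrite <- T1, <- !H1, <- (morphV f1 h1), <- !h1, hrel; auto. }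
  destruct (hU G _ _ hf rel) as [_ uniq].
  apply (uniq f1 f2); auto.
  - intro h. rewrite H2. auto.
  - rewrite T2, Ea. reflexivity.
Qed.

End HNN.

Section NormalFormAction.
Variables (H : Group) (K : H -> Prop) (phi phiinv : H -> H).
Hypotheses (HK : is_subgroup K) (phi_hom : is_hom phi).
Hypotheses (phiK : forall x, phiinv (phi x) = x) (phiKV : forall x, phi (phiinv x) = x).
Variables (G : Group) (iH : H -> G) (t : G).
Hypothesis HG : is_HNN H K phi G iH t.

Local Notation assoc := (assoc H K phiinv).
Local Notation assoc_iso := (assoc_iso H phi phiinv).
Local Notation tmul := (tmul H K phi phiinv).
Local Notation reduced := (reduced H K phiinv).
Local Notation lmul := (lmul H).
Local Notation rnf := (rnf H K phiinv).
Local Notation NFGroup := (NFGroup H K phiinv).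
Local Notation Lperm := (Lperm H K phiinv).
Local Notation Tperm := (Tperm H K phi phiinv HK phi_hom phiK phiKV).
Let hiH := iH_hom H K phi G iH t HG.

Definition tpow (e : bool) : G := if e then t else t^-1.

Lemma tpowV e : tpow e * tpow (negb e) = 1.
Proof. destruct e; [apply mulgV | apply gmulV]. Qed.

Lemma tpow_assoc e s : assoc e s -> tpow e * iH s = iH (assoc_iso e s) * tpow e.
Proof.
  destruct e; simpl; intro hs.
  - rewrite <- (t_rel H K phi G iH t HG s hs), mulgKV. reflexivity.
  - rewrite <- (phiKV s) at 1. rewrite <- (t_rel H K phi G iH t HG _ hs). gsimpl. reflexivity.
Qed.

Fixpoint eval_letters (l : list (bool * H)) : G :=
  match l with [] => 1 | (e, r) :: l' => tpow e * (iH r * eval_letters l') end.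

Definition eval_nf (p : nf H) : G := iH (fst p) * eval_letters (snd p).

Lemma eval_nf_lmul h p : eval_nf (lmul h p) = iH h * eval_nf p.
Proof. destruct p. unfold eval_nf, lmul. simpl. rewrite hiH, gmulA. reflexivity. Qed.

Lemma eval_nf_tmul e p : eval_nf (tmul e p) = tpow e * eval_nf p.
Proof.
  destruct p as [h l]. unfold tmul, eval_nf.
  assert (hk := coset_repP _ (assoc_subgroup H K phi phiinv HK phi_hom phiK phiKV e) h).
  set (r := coset_rep (assoc e) h) in *.
  assert (E : tpow e * iH h = iH (assoc_iso e (h * r^-1)) * tpow e * iH r).
  { rewrite <- (mulgKV h r) at 1. rewrite hiH, gmulA, tpow_assoc; auto. }
  destruct (excluded_middle_informative _) as [[r1 c]|c]; simpl.
  - destruct l as [|[e' r'] l']; simpl in c; [discriminate|]. injection c as ->. simpl.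
    rewrite gmulA, E, r1, (morph1 _ hiH), mulg1, hiH. gsimpl.
    rewrite (gmulA _ (tpow e)), tpowV, gmul1. reflexivity.
  - rewrite (gmulA _ (tpow e) (iH h)), E. gsimpl. reflexivity.
Qed.

Lemma nf_action : exists rho : G -> NFGroup,
  is_hom rho /\ (forall h, rho (iH h) = Lperm h) /\ rho t = Tperm.
Proof.
  apply (proj2 (proj2 HG) NFGroup Lperm Tperm (Lperm_hom H K phiinv)).
  apply Tperm_rel.
Qed.

Section Orbit.
Variable rho : G -> NFGroup.
Hypotheses (rho_hom : is_hom rho) (rho_iH : forall h, rho (iH h) = Lperm h) (rho_t : rho t = Tperm).

Definition act (x : G) (w : rnf) : nf H := proj1_sig (pfun _ (rho x) w).

Lemma act_mul x y w : act (x * y) w = act x (pfun _ (rho y) w).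
Proof. unfold act. rewrite rho_hom. reflexivity. Qed.

Lemma act_iH h w : act (iH h) w = lmul h (proj1_sig w).
Proof. unfold act. rewrite rho_iH. reflexivity. Qed.

Lemma act_tpow e w : act (tpow e) w = tmul e (proj1_sig w).
Proof. unfold act. destruct e; simpl; rewrite ?(morphV _ rho_hom), rho_t; reflexivity. Qed.

Lemma eval_nf_act x w : eval_nf (act x w) = x * eval_nf (proj1_sig w).
Proof.
  revert x w. apply (HNN_ind H K phi G iH t HG (fun x => forall w, eval_nf (act x w) = x * eval_nf (proj1_sig w))).
  - intro w. unfold act. rewrite (morph1 _ rho_hom), gmul1. reflexivity.
  - intros x y hx hy w. rewrite act_mul, hx. fold (act y w). rewrite hy, gmulA. reflexivity.
  - intros x hx w.
    specialize (hx (pinv _ (rho x) w)). unfold act in *. rewrite pinvK in hx.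
    rewrite (morphV _ rho_hom), hx, mulKg. reflexivity.
  - intros h w. rewrite act_iH. apply eval_nf_lmul.
  - intro w. exact (eq_trans (f_equal eval_nf (act_tpow true w)) (eval_nf_tmul true _)).
Qed.

Definition nf1 : rnf := exist (fun p : nf H => reduced (snd p)) (1, []) I.

Lemma act_letters l w : act (eval_letters l) w = apply_letters H K phi phiinv l (proj1_sig w).
Proof.
  induction l as [|[e r] l IH]; cbn [eval_letters apply_letters].
  - unfold act. rewrite (morph1 _ rho_hom). reflexivity.
  - rewrite act_mul, act_tpow. f_equal.
    change (act (iH r * eval_letters l) w = lmul r (apply_letters H K phi phiinv l (proj1_sig w))).
    rewrite act_mul, act_iH, <- IH. reflexivity.
Qed.

Lemma centralizer_iH z : proper K -> (forall h, z * iH h = iH h * z) ->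
  exists h0, center h0 /\ z = iH h0.
Proof.
  intros [h1 nKh1] zc.
  assert (red := proj2_sig (pfun _ (rho z) nf1)).
  assert (ev := eval_nf_act z nf1). fold (act z nf1) in red.
  destruct (act z nf1) as [h0 l] eqn:Ez. simpl in red.
  unfold eval_nf in ev. simpl in ev. rewrite (morph1 _ hiH), !mulg1 in ev.
  assert (shift : forall h, (h * h0, l) = lmul h0 (apply_letters H K phi phiinv l (h * 1, []))).
  { intro h. transitivity (act (iH h * z) nf1).
    - rewrite act_mul, act_iH. fold (act z nf1). rewrite Ez. reflexivity.
    - rewrite <- zc, <- ev, <- gmulA, act_mul, act_iH. f_equal.
      change (act (eval_letters l * iH h) nf1 = apply_letters H K phi phiinv l (h * 1, [])).
      rewrite act_mul, act_letters. fold (act (iH h) nf1). rewrite act_iH. reflexivity. }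
  destruct l as [|[e r] l].
  - exists h0. split; [|rewrite <- ev; apply mulg1].
    intro h. specialize (shift h). unfold lmul in shift. simpl in shift.
    injection shift as E. rewrite mulg1 in E. symmetry. exact E.
  - exfalso. apply nKh1.
    apply (apply_letters_fixed_total H K phi phiinv HK phi_hom phiK phiKV e r l red).
    intro h. specialize (shift h). rewrite mulg1 in shift. unfold lmul in shift.
    injection shift as _ E. symmetry. exact E.
Qed.

Lemma t_conj_iH x y : t * iH x = iH y * t -> K x /\ phi x = y.
Proof.
  intro E. apply (f_equal (fun g => act g nf1)) in E. cbv beta in E.
  assert (act_t : forall w, act t w = tmul true (proj1_sig w)) by exact (act_tpow true).
  rewrite !act_mul, act_t, act_iH in E. fold (act (iH x) nf1) (act t nf1) in E.
  rewrite act_t, act_iH in E. unfold lmul in E. cbn -[tmul] in E.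
  rewrite !mulg1, !tmul_nil in E. simpl in E.
  assert (rep1 : coset_rep K 1 = 1) by (apply coset_rep_eq1; [exact HK | apply group1, HK]).
  rewrite rep1, invg1, mulg1, (morph1 _ phi_hom), mulg1 in E.
  injection E as Ephi Erep. rewrite Erep, invg1, mulg1 in Ephi.
  split; [apply (coset_rep_eq1 _ HK), Erep | exact Ephi].
Qed.

End Orbit.
End NormalFormAction.

Section Alpha.
Variables (H : Group) (K : H -> Prop) (phi : H -> H) (phi_hom : is_hom phi).
Variables (G : Group) (iH : H -> G) (t : G).
Hypothesis HG : is_HNN H K phi G iH t.
Let hiH := iH_hom H K phi G iH t HG.

Lemma alpha_comp delta1 a1 delta2 a2 f1 f2 :
  is_alpha iH t delta1 a1 f1 -> is_alpha iH t delta2 a2 f2 ->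
  is_alpha iH t (fun h => delta2 (delta1 h)) (delta2 a1 * a2) (fun x => f2 (f1 x)).
Proof.
  intros [hom1 [H1 T1]] [hom2 [H2 T2]]. split; [|split].
  - intros x y. rewrite hom1, hom2. reflexivity.
  - intro h. rewrite H1, H2. reflexivity.
  - rewrite T1, hom2, H2, T2, hiH, gmulA. reflexivity.
Qed.

Lemma alpha_aut delta a delta' a' f f' :
  is_alpha iH t delta a f -> is_alpha iH t delta' a' f' ->
  (forall h, delta' (delta h) = h) -> (forall h, delta (delta' h) = h) ->
  delta' a * a' = 1 -> delta a' * a = 1 -> is_aut f.
Proof.
  intros af af' dK dK' aK aK'.
  assert (id : is_alpha iH t (fun h => h) 1 (fun x => x)).
  { split; [intros x y; reflexivity | split; [reflexivity|]].
    rewrite (morph1 _ hiH), gmul1. reflexivity. }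
  split; [apply af|]. exists f'. split.
  - apply (alpha_unique H K phi G iH t HG _ _ _ _ _ _ (alpha_comp _ _ _ _ _ _ af af') id).
    + intro h. rewrite dK. reflexivity.
    + rewrite aK. reflexivity.
  - apply (alpha_unique H K phi G iH t HG _ _ _ _ _ _ (alpha_comp _ _ _ _ _ _ af' af) id).
    + intro h. rewrite dK'. reflexivity.
    + rewrite aK'. reflexivity.
Qed.

(* The parameter [b^-1 phi b] of [chi2 b] is a crossed homomorphism for [gam]. *)
Lemma chi2_paramM b c :
  (b * c)^-1 * phi (b * c) = gam c (b^-1 * phi b) * (c^-1 * phi c).
Proof. unfold gam. rewrite phi_hom. gsimpl. reflexivity. Qed.

Lemma normalizerV b : normalizer K b -> normalizer K b^-1.
Proof.
  intros nb x. rewrite invgK. split; intro q.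
  - apply nb. gsimpl. exact q.
  - apply nb in q. revert q. gsimpl. auto.
Qed.

Lemma chi2_exists b : normalizer K b -> exists f, is_alpha iH t (gam b) (b^-1 * phi b) f.
Proof.
  intro nb. apply (alpha_exists H K phi G iH t HG).
  - intros x y. rewrite gam_hom, hiH. reflexivity.
  - intros k hk.
    transitivity (iH (b^-1 * phi b) * (t * iH (gam b k) * t^-1) * (iH (b^-1 * phi b))^-1).
    { gsimpl. reflexivity. }
    rewrite (t_rel H K phi G iH t HG (gam b k) (proj1 (nb k) hk)), <- (morphV _ hiH), <- !hiH.
    f_equal. unfold gam. rewrite !phi_hom, !(morphV _ phi_hom). gsimpl. reflexivity.
Qed.

Lemma chi2_aut b f : normalizer K b -> is_alpha iH t (gam b) (b^-1 * phi b) f -> is_aut f.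
Proof.
  intros nb af. destruct (chi2_exists b^-1 (normalizerV b nb)) as [f' af'].
  apply (alpha_aut _ _ _ _ _ _ af af'); intros; rewrite <- ?chi2_paramM, <- ?gamM;
    rewrite ?mulgV, ?gmulV, ?gam1, ?invg1, ?(morph1 _ phi_hom), ?gmul1; reflexivity.
Qed.

Lemma chi2_inner b f : prodset (Jset phi) K b ->
  is_alpha iH t (gam b) (b^-1 * phi b) f -> is_inner f.
Proof.
  intros [j [k [[cj fj] [hk ->]]]] af. exists (iH k).
  assert (ak : is_alpha iH t (gam k) (k^-1 * phi k) (gam (iH k))).
  { split; [apply gam_hom | split].
    - intro h. unfold gam. rewrite !hiH, (morphV _ hiH). reflexivity.
    - unfold gam. rewrite hiH, (morphV _ hiH), <- (t_rel H K phi G iH t HG k hk).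
      gsimpl. reflexivity. }
  apply (alpha_unique H K phi G iH t HG _ _ _ _ _ _ af ak).
  - intro h. f_equal. unfold gam. gsimpl. rewrite (gmulA _ h j), <- cj. gsimpl. reflexivity.
  - f_equal. rewrite phi_hom, fj. gsimpl. reflexivity.
Qed.

End Alpha.

Lemma chi2_kernel (H : Group) (K : H -> Prop) (phi : H -> H)
  (HK : is_subgroup K) (HKp : proper K) (Hphi : is_aut phi)
  (G : Group) (iH : H -> G) (t : G) (HG : is_HNN H K phi G iH t) b f :
  is_alpha iH t (gam b) (b^-1 * phi b) f -> is_inner f -> prodset (Jset phi) K b.
Proof.
  destruct Hphi as [phi_hom [phiinv [phiK phiKV]]].
  intros [_ [fH ft]] [c fc]. assert (hiH := iH_hom H K phi G iH t HG).
  destruct (nf_action H K phi phiinv HK phi_hom phiK phiKV G iH t HG)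
    as [rho [rho_hom [rho_iH rho_t]]].
  assert (z_central : forall h, c * (iH b)^-1 * iH h = iH h * (c * (iH b)^-1)).
  { intro h. apply conj_eq_commute. change (gam c (iH h) = gam (iH b) (iH h)).
    rewrite <- fc, fH. unfold gam. rewrite !hiH, (morphV _ hiH). reflexivity. }
  destruct (centralizer_iH H K phi phiinv HK phi_hom phiK phiKV G iH t HG rho rho_hom rho_iH rho_t
    _ HKp z_central) as [h0 [h0_central Ez]].
  assert (Ec : c = iH (h0 * b)) by (rewrite hiH, <- Ez, mulgKV; reflexivity).
  assert (Et : t * iH (h0 * b) = iH (h0 * phi b) * t).
  { rewrite <- Ec. apply (mulgI c^-1). rewrite fc in ft. unfold gam in ft.
    rewrite gmulA, ft, Ec, <- (morphV _ hiH), gmulA, <- !hiH. gsimpl. reflexivity. }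
  destruct (t_conj_iH H K phi phiinv HK phi_hom phiK phiKV G iH t rho rho_hom rho_iH rho_t _ _ Et)
    as [Kh0b Eh0b].
  rewrite phi_hom in Eh0b. apply mulIg in Eh0b.
  exists h0^-1, (h0 * b). split; [split|split; [exact Kh0b | gsimpl; reflexivity]].
  - intro h. apply (mulgI h0). rewrite mulKVg, gmulA, h0_central, mulgK. reflexivity.
  - unfold Fix. rewrite (morphV _ phi_hom), Eh0b. reflexivity.
Qed.

Theorem lemma5p1 (H : Group) (K : H -> Prop) (phi : H -> H)
  (HK : is_subgroup K) (HKp : proper K) (Hphi : is_aut phi)
  (G : Group) (iH : H -> G) (t : G) (HG : is_HNN H K phi G iH t) :
  (forall b, normalizer K b ->
     exists f, is_alpha iH t (gam b) (b^-1 * phi b) f /\ is_aut f /\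
               in_OutHV K phi iH t f) /\
  (forall b c fb fc fbc, normalizer K b -> normalizer K c ->
     is_alpha iH t (gam b) (b^-1 * phi b) fb ->
     is_alpha iH t (gam c) (c^-1 * phi c) fc ->
     is_alpha iH t (gam (b * c)) ((b * c)^-1 * phi (b * c)) fbc ->
     out_eq fbc (fun x => fc (fb x))) /\
  (forall b fb, normalizer K b ->
     is_alpha iH t (gam b) (b^-1 * phi b) fb ->
     (is_inner fb <-> prodset (Jset phi) K b)).
Proof.
  assert (phi_hom : is_hom phi) by apply Hphi.
  split; [|split].
  - intros b nb. destruct (chi2_exists H K phi phi_hom G iH t HG b nb) as [f af].
    assert (aut := chi2_aut H K phi phi_hom G iH t HG b f nb af).
    exists f. split; [exact af | split; [exact aut|]].
    exists b, (b^-1 * phi b), f.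
    split; [exact nb | split; [|split; [exact af | split; [exact aut|]]]].
    + intros k _. gsimpl. reflexivity.
    + exists 1. intro x. rewrite gam1. reflexivity.
  - intros b c fb fc fbc _ _ ab ac abc. exists 1. intro x. rewrite gam1.
    apply (alpha_unique H K phi G iH t HG _ _ _ _ _ _ abc (alpha_comp H K phi G iH t HG _ _ _ _ _ _ ab ac)).
    + intro h. rewrite gamM. reflexivity.
    + rewrite chi2_paramM by exact phi_hom. reflexivity.
  - intros b fb _ ab. split.
    + exact (chi2_kernel H K phi HK HKp Hphi G iH t HG b fb ab).
    + intro hb. exact (chi2_inner H K phi phi_hom G iH t HG b fb hb ab).
Qed.
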